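(* Let $\mathbf{L}=\langle L,\leq,0,1\rangle$ be a totally ordered complete lattice (regarded as a Gödel algebra), let $\varphi$ be a formula of a first-order language $\mathcal{J}$ and let $\mathbf{M}$ be a finite $\mathbf{L}$-structure for $\mathcal{J}$. Let $f\colon L\to L$ be an order embedding with $f(0)=0$ and $f(1)=1$. Then $\mathcal{D}_{\mathbf{M},\varphi}\circ f=\mathcal{D}_{\mathbf{M}\circ f,\varphi}$, where $\mathbf{M}\circ f$ is the $\mathbf{L}$-structure with the same universe as $\mathbf{M}$ and $\mathbf{r}^{\mathbf{M}\circ f}=\mathbf{r}^{\mathbf{M}}\circ f$ for every relation symbol $\mathbf{r}$ of $\mathcal{J}$.
   Context: On $L$ define $a\rightarrow b=1$ if $a\leq b$ and $a\rightarrow b=b$ otherwise. A language $\mathcal{J}$ is a set of relation symbols with arities; $X$ is a countable set of object variables. Formulas: $\overline{0}$; $\mathbf{r}(x_1,\dots,x_n)$ for $n$-ary $\mathbf{r}$ and $x_i\in X$; $\varphi\wedge\psi$, $\varphi\Rightarrow\psi$; $(\forall x)\varphi$, $(\exists x)\varphi$. An $\mathbf{L}$-structure $\mathbf{M}$ consists of a non-empty universe $M$ and, for each $n$-ary $\mathbf{r}$, a map $\mathbf{r}^{\mathbf{M}}\colon M^n\to L$; it is finite if each $\mathbf{r}^{\mathbf{M}}$ takes a nonzero value on only finitely many arguments. For a valuation $v\colon X\to M$: $\|\overline{0}\|_{\mathbf{M},v}=0$, $\|\mathbf{r}(x_1,\dots,x_n)\|_{\mathbf{M},v}=\mathbf{r}^{\mathbf{M}}(v(x_1),\dots,v(x_n))$,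 $\|\varphi\wedge\psi\|=\inf\{\|\varphi\|,\|\psi\|\}$, $\|\varphi\Rightarrow\psi\|=\|\varphi\|\rightarrow\|\psi\|$, $\|(\forall x)\varphi\|_{\mathbf{M},v}=\inf\{\|\varphi\|_{\mathbf{M},w};\ w=_x v\}$, $\|(\exists x)\varphi\|_{\mathbf{M},v}=\sup\{\|\varphi\|_{\mathbf{M},w};\ w=_x v\}$, where $w=_x v$ means $w$ agrees with $v$ except possibly at $x$. If the free variables of $\varphi$ are $x_1,\dots,x_n$ and $R=\{x_1,\dots,x_n\}$ (used as attributes with values in $M$), $\mathcal{D}_{\mathbf{M},\varphi}$ is the map on tuples $r\colon R\to M$ given by $\mathcal{D}_{\mathbf{M},\varphi}(r)=\|\varphi\|_{\mathbf{M},v}$ for any valuation $v$ with $v(x_i)=r(x_i)$ for all $i$. For a map $g$ into $L$, $g\circ f$ denotes $x\mapsto f(g(x))$. $f$ is an order embedding if $a\leq b\iff f(a)\leq f(b)$. *)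

From HB Require Import structures.
From Stdlib Require List.
From mathcomp Require Import all_boot all_order.
Set Implicit Arguments. Unset Strict Implicit. Unset Printing Implicit Defensive.
Import Order.TTheory.
Local Open Scope order_scope.

Section Syntax.
Variables (Sym : Type) (ar : Sym -> nat).

Inductive formula : Type :=
| FBot : formula
| FRel (r : Sym) (xs : 'I_(ar r) -> nat) : formula
| FAnd : formula -> formula -> formula
| FImp : formula -> formula -> formula
| FAll : nat -> formula -> formula
| FEx : nat -> formula -> formula.

Fixpoint fv (phi : formula) : seq nat :=
  match phi with
  | FBot => [::]
  | FRel r xs => undup [seq xs i | i <- enum 'I_(ar r)]
  | FAnd a b => undup (fv a ++ fv b)
  | FImp a b => undup (fv a ++ fv b)
  | FAll x a => [seq y <- fv a | y != x]
  | FEx x a => [seq y <- fv a | y != x]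
  end.
End Syntax.

Definition is_sup d (L : porderType d) (S : L -> Prop) (l : L) :=
  (forall a, S a -> a <= l) /\ (forall b, (forall a, S a -> a <= b) -> l <= b).
Definition is_inf d (L : porderType d) (S : L -> Prop) (l : L) :=
  (forall a, S a -> l <= a) /\ (forall b, (forall a, S a -> b <= a) -> b <= l).

Definition gimp d (L : tbOrderType d) (a b : L) : L :=
  if a <= b then \top else b.

Record Lstructure (Sym : Type) (ar : Sym -> nat) (L : Type) := LStr {
  univ : Type;
  univ_witness : univ;
  rel : forall r : Sym, ('I_(ar r) -> univ) -> L
}.

(* finite: each r^M is nonzero on only finitely many arguments *)
Definition finite_structure d (L : tbOrderType d) Sym (ar : Sym -> nat)
    (M : Lstructure ar L) : Prop :=
  forall r : Sym, exists s : seq ('I_(ar r) -> univ M),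
    forall a, @rel _ _ _ M r a <> \bot -> Stdlib.Lists.List.In a s.

(* M o f : same universe, r^(M o f) = f o r^M (paper's notation r^M o f) *)
Definition compose_str Sym (ar : Sym -> nat) (L : Type) (M : Lstructure ar L)
    (f : L -> L) : Lstructure ar L :=
  @LStr Sym ar L (univ M) (univ_witness M) (fun r a => f (@rel _ _ _ M r a)).

Section Semantics.
Variables (d : Order.disp_t) (L : tbOrderType d)
  (sup inf : (L -> Prop) -> L) (Sym : Type) (ar : Sym -> nat)
  (M : Lstructure ar L).

Fixpoint eval (phi : formula ar) (v : nat -> univ M) : L :=
  match phi with
  | FBot => \bot
  | FRel r xs => @rel _ _ _ M r (fun i => v (xs i))
  | FAnd a b => inf (fun c => c = eval a v \/ c = eval b v)
  | FImp a b => gimp (eval a v) (eval b v)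
  | FAll x a => inf (fun c => exists w : nat -> univ M,
                      (forall y, y <> x -> w y = v y) /\ c = eval a w)
  | FEx x a => sup (fun c => exists w : nat -> univ M,
                      (forall y, y <> x -> w y = v y) /\ c = eval a w)
  end.

(* tuples on the attribute set R = free variables of phi *)
Definition attr_tuple (phi : formula ar) := {x : nat | x \in fv phi} -> univ M.

(* a valuation extending a tuple (values outside R are irrelevant) *)
Definition ext_val (phi : formula ar) (r : attr_tuple phi) : nat -> univ M :=
  fun y => match @insub nat (fun x => x \in fv phi) _ y with
           | Some s => r s
           | None => univ_witness M
           end.

Definition Dmap (phi : formula ar) (r : attr_tuple phi) : L :=
  eval phi (ext_val r).
End Semantics.

From Pilot Require Import Defs.
From HB Require Import structures.
From mathcomp Require Import all_boot all_order.
From Stdlib Require Import Classical.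
Import Order.TTheory.
Local Open Scope order_scope.

(* Over a finite structure every formula takes only finitely many truth values,
   so each infimum and supremum in its semantics is attained, i.e. is a minimum
   or a maximum.  A monotone map sends minima and maxima to minima and maxima of
   the image set, and an order embedding fixing 1 commutes with the Goedel
   implication; induction on the formula does the rest. *)

Section FiniteInfima.
Context {d : Order.disp_t} {L : orderType d}.
Implicit Types (S T : L -> Prop) (l : seq L).

Lemma finite_has_min {l S} : (forall c, S c -> List.In c l) -> (exists c, S c) ->
  exists2 m, S m & forall c, S c -> m <= c.
Proof.
elim: l S => [|x l IHl] S Sl [c0 Sc0]; first by case: (Sl c0 Sc0).
have [S'_ne|nSl] := classic (exists c, S c /\ List.In c l).
  have [m [Sm _] m_min] : exists2 m, S m /\ List.In m l &
      forall c, S c /\ List.In c l -> m <= c by apply: IHl => // c [].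
  have [[Sx xm]|] := classic (S x /\ x <= m).
    exists x => // c' Sc'; case: (Sl c' Sc') => [->//|c'l].
    exact: le_trans xm (m_min c' (conj Sc' c'l)).
  move=> nx; exists m => // c' Sc'; case: (Sl c' Sc') => [xc'|c'l]; last exact: m_min.
  by subst c'; case: (leP x m) nx => [xm []//|/ltW].
have Sx_only c : S c -> c = x.
  by move=> Sc; case: (Sl c Sc) => // cl; case: nSl; exists c.
by exists x => [|c /Sx_only ->]; rewrite -?(Sx_only c0 Sc0).
Qed.

Lemma is_inf_min {S m} : S m -> (forall c, S c -> m <= c) -> is_inf S m.
Proof. by move=> Sm m_min; split => // b /(_ m Sm). Qed.

Lemma is_inf_unique {S m m'} : is_inf S m -> is_inf S m' -> m = m'.
Proof. by move=> [m_lb m_glb] [m'_lb m'_glb]; apply/le_anti; rewrite m'_glb ?m_glb. Qed.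

Lemma is_inf_finite_mem {l S i} : (forall c, S c -> List.In c l) -> (exists c, S c) ->
  is_inf S i -> S i.
Proof.
move=> Sl S_ne Si; have [m Sm m_min] := finite_has_min Sl S_ne.
by rewrite (is_inf_unique Si (is_inf_min Sm m_min)).
Qed.

Context {f : L -> L} (f_mono : {homo f : a b / a <= b}).

Lemma is_inf_image {S T m} : S m -> is_inf S m ->
  (forall c, T c <-> exists2 c', S c' & c = f c') -> is_inf T (f m).
Proof.
move=> Sm [m_lb _] T_img; apply: is_inf_min => [|_ /T_img[c Sc ->]]; last exact/f_mono/m_lb.
by apply/T_img; exists m.
Qed.

Lemma inf_image (inf : (L -> Prop) -> L) (Hinf : forall S, is_inf S (inf S)) l S T :
  (forall c, S c -> List.In c l) -> (exists c, S c) ->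
  (forall c, T c <-> exists2 c', S c' & c = f c') -> f (inf S) = inf T.
Proof.
move=> Sl S_ne T_img; apply: is_inf_unique (Hinf T).
exact: is_inf_image (is_inf_finite_mem Sl S_ne (Hinf S)) (Hinf S) T_img.
Qed.

End FiniteInfima.

Lemma is_sup_finite_mem {d} {L : orderType d} {l} {S : L -> Prop} {i} :
  (forall c, S c -> List.In c l) -> (exists c, S c) -> is_sup S i -> S i.
Proof. exact: (@is_inf_finite_mem _ L^d). Qed.

Lemma sup_image {d} {L : orderType d} {f : L -> L} (f_mono : {homo f : a b / a <= b})
  (sup : (L -> Prop) -> L) (Hsup : forall S, is_sup S (sup S)) l (S T : L -> Prop) :
  (forall c, S c -> List.In c l) -> (exists c, S c) ->
  (forall c, T c <-> exists2 c', S c' & c = f c') -> f (sup S) = sup T.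
Proof. exact: (@inf_image _ L^d f (fun a b ba => f_mono b a ba) sup Hsup). Qed.

Lemma gimp_embedding d (L : tbOrderType d) (f : L -> L)
  (f_emb : forall a b : L, a <= b <-> f a <= f b) (f1 : f \top = \top) (a b : L) :
  f (gimp a b) = gimp (f a) (f b).
Proof.
rewrite /gimp; have -> : (f a <= f b) = (a <= b) by apply/idP/idP => /(f_emb a b).
by case: ifP.
Qed.

Section EvalEmbedding.
Variables (d : Order.disp_t) (L : tbOrderType d) (sup inf : (L -> Prop) -> L)
  (Hsup : forall S, is_sup S (sup S)) (Hinf : forall S, is_inf S (inf S))
  (Sym : Type) (ar : Sym -> nat) (M : Lstructure ar L) (HM : finite_structure M).

Lemma eval_range_finite (psi : formula ar) :
  exists l : seq L, forall v : nat -> univ M, List.In (eval sup inf psi v) l.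
Proof.
have inf_in l S : (forall c, S c -> List.In c l) -> (exists c, S c) -> List.In (inf S) l.
  by move=> Sl S_ne; exact: Sl (is_inf_finite_mem Sl S_ne (Hinf S)).
have sup_in l S : (forall c, S c -> List.In c l) -> (exists c, S c) -> List.In (sup S) l.
  by move=> Sl S_ne; exact: Sl (is_sup_finite_mem Sl S_ne (Hsup S)).
elim: psi => [|r xs|a [la Ha] b [lb Hb]|a _ b [lb Hb]|x a [la Ha]|x a [la Ha]].
- by exists [:: \bot]; left.
- have [s Hs] := HM r; exists (\bot :: map (@Defs.rel _ _ _ M r) s) => v /=.
  have [->|/Hs] := classic (Defs.rel (fun i => v (xs i)) = \bot); first by left.
  by right; apply: List.in_map.
- exists (la ++ lb) => v; apply: inf_in => [c|].
  + by case=> ->; apply: List.in_or_app; [left|right].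
  + by exists (eval sup inf a v); left.
- by exists (\top :: lb) => v /=; rewrite /gimp; case: ifP => _; [left|right].
- exists la => v; apply: inf_in => [c [w [_ ->]]//|].
  by exists (eval sup inf a v), v.
- exists la => v; apply: sup_in => [c [w [_ ->]]//|].
  by exists (eval sup inf a v), v.
Qed.

Variables (f : L -> L) (f_emb : forall a b : L, a <= b <-> f a <= f b)
  (f0 : f \bot = \bot) (f1 : f \top = \top).

Lemma eval_compose_str (psi : formula ar) (v : nat -> univ M) :
  f (eval sup inf psi v) = eval (M := compose_str M f) sup inf psi v.
Proof.
have f_mono : {homo f : a b / a <= b} by move=> a b /f_emb.
elim: psi v => [|r xs|a IHa b IHb|a IHa b IHb|x a IHa|x a IHa] v //=.
- have [la Ha] := eval_range_finite a; have [lb Hb] := eval_range_finite b.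
  apply: (inf_image f_mono inf Hinf (la ++ lb)) => [c||c].
  + by case=> ->; apply: List.in_or_app; [left|right].
  + by exists (eval sup inf a v); left.
  + rewrite -IHa -IHb; split=> [[->|->]|[_ [->|->] ->]]; [| | by left | by right].
    * by exists (eval sup inf a v); first left.
    * by exists (eval sup inf b v); first right.
- by rewrite -IHa -IHb gimp_embedding.
- have [la Ha] := eval_range_finite a.
  apply: (inf_image f_mono inf Hinf la) => [c [w [_ ->]]//||c].
  + by exists (eval sup inf a v), v.
  + split=> [[w [xw ->]]|[_ [w [xw ->]] ->]].
    * by exists (eval sup inf a w); [exists w | rewrite IHa].
    * by exists w; rewrite IHa.
- have [la Ha] := eval_range_finite a.
  apply: (sup_image f_mono sup Hsup la) => [c [w [_ ->]]//||c].
  + by exists (eval sup inf a v), v.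
  + split=> [[w [xw ->]]|[_ [w [xw ->]] ->]].
    * by exists (eval sup inf a w); [exists w | rewrite IHa].
    * by exists w; rewrite IHa.
Qed.

End EvalEmbedding.

Theorem corollary8 (d : Order.disp_t) (L : tbOrderType d)
  (sup inf : (L -> Prop) -> L)
  (Hsup : forall S, is_sup S (sup S)) (Hinf : forall S, is_inf S (inf S))
  (Sym : Type) (ar : Sym -> nat) (phi : formula ar) (M : Lstructure ar L)
  (HM : finite_structure M) (f : L -> L)
  (Hf : forall a b : L, a <= b <-> f a <= f b)
  (Hf0 : f \bot = \bot) (Hf1 : f \top = \top) :
  forall r : attr_tuple M phi,
    f (Dmap sup inf r) = Dmap (M := compose_str M f) (phi := phi) sup inf r.
Proof. by move=> r; apply: eval_compose_str. Qed.
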